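(* Assume $a/b>\sqrt2$, $|u|<u_{\max}$ and $a^2+(u^2-2)c^2\ne0$. With $R$ and $R'$ as below, $$\frac1{R^2}+\frac1{R'^2}=\frac1{c^2},$$ i.e. half the harmonic mean of $R^2$ and $R'^2$ equals $c^2=a^2-b^2$, independently of $u$.
   Context: The elliptic billiard is $\mathcal{E}: x^2/a^2+y^2/b^2=1$, $a>b>0$, $c=\sqrt{a^2-b^2}$. For $a/b>\sqrt2$ the self-intersected 4-periodics are parametrized by $u$ with $|u|\le u_{\max}:=\frac{a}{c^2}\sqrt{a^2-2b^2}$. For parameter $u$, the vertices of the self-intersected 4-periodic and the foci lie on a circle of radius $R=\frac{a^2-c^2u^2}{2b\sqrt{1-u^2}}$, and the vertices of its outer polygon (the polygon whose vertices are intersections of tangent lines to $\mathcal{E}$ at consecutive vertices) and the foci lie on a circle of radius $|R'|$, where $R'=\frac{c(c^2u^2-a^2)}{a^2+(u^2-2)c^2}$. *)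

From Stdlib Require Import Reals.
Open Scope R_scope.

Definition focal_c (a b : R) : R := sqrt (a^2 - b^2).

Definition u_max (a b : R) : R :=
  a / (focal_c a b)^2 * sqrt (a^2 - 2 * b^2).

(* Radius of the circle through the vertices of the self-intersected
   4-periodic and the foci. *)
Definition radR (a b u : R) : R :=
  (a^2 - (focal_c a b)^2 * u^2) / (2 * b * sqrt (1 - u^2)).

(* Signed radius R' of the circle through the vertices of the outer polygon
   and the foci (the radius is |R'|). *)
Definition radR' (a b u : R) : R :=
  let c := focal_c a b in
  c * (c^2 * u^2 - a^2) / (a^2 + (u^2 - 2) * c^2).

From Stdlib Require Import Reals Lra Psatz.
Open Scope R_scope.

(* Write c^2 = a^2 - b^2, s = sqrt (1 - u^2),
   N = a^2 - c^2 u^2 and D = a^2 + (u^2 - 2) c^2.  Then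
   R = N / (2 b s) and R' = - c N / D, so
     1/R^2 + 1/R'^2 = (4 b^2 c^2 s^2 + D^2) / (c^2 N^2),
   and the whole theorem reduces to the polynomial identity
     4 b^2 c^2 (1 - u^2) + D^2 = N^2,
   which holds for all a, b, u once c^2 is replaced by a^2 - b^2.
   The file first proves this identity and the abstract "harmonic"
   consequence for arbitrary nonzero N, D; the remaining lemmas only
   supply the side conditions: c > 0, u^2 < 1 (from |u| < u_max < 1, which
   uses a^2 > 2 b^2), and N > 0. *)

Lemma radii_key_identity (a b u : R) :
  4 * b^2 * (1 - u^2) * (a^2 - b^2) + (a^2 + (u^2 - 2) * (a^2 - b^2))^2
  = (a^2 - (a^2 - b^2) * u^2)^2.
Proof. ring. Qed.

Lemma inv_sq_sum_of_identity (b c s N D : R) :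
  b <> 0 -> c <> 0 -> s <> 0 -> N <> 0 -> D <> 0 ->
  4 * b^2 * s^2 * c^2 + D^2 = N^2 ->
  1 / (N / (2 * b * s))^2 + 1 / (c * - N / D)^2 = 1 / c^2.
Proof.
  intros hb hc hs hN hD key.
  replace (1 / (N / (2 * b * s))^2 + 1 / (c * - N / D)^2)
    with ((4 * b^2 * s^2 * c^2 + D^2) / (c^2 * N^2)) by (field; tauto).
  rewrite key. field. tauto.
Qed.

Lemma focal_c_sq (a b : R) : b < a -> 0 < b -> (focal_c a b)^2 = a^2 - b^2.
Proof. intros hab hb. unfold focal_c. rewrite pow2_sqrt; nra. Qed.

Lemma focal_c_pos (a b : R) : b < a -> 0 < b -> 0 < focal_c a b.
Proof. intros hab hb. unfold focal_c. apply sqrt_lt_R0. nra. Qed.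

Lemma ratio_gt_sqrt2_sq (a b : R) : 0 < b -> a / b > sqrt 2 -> a^2 > 2 * b^2.
Proof.
  intros hb hs.
  assert (ha : a > sqrt 2 * b).
  { apply Rmult_gt_compat_r with (r := b) in hs; [|lra].
    replace (a / b * b) with a in hs by (field; lra). lra. }
  assert (h2 : sqrt 2 * sqrt 2 = 2) by (apply sqrt_sqrt; lra).
  assert (0 <= sqrt 2 * b) by (pose proof (sqrt_pos 2); nra).
  assert (a * a > (sqrt 2 * b) * (sqrt 2 * b)) by nra.
  replace ((sqrt 2 * b) * (sqrt 2 * b)) with (sqrt 2 * sqrt 2 * b^2) in * by ring.
  rewrite h2 in *. nra.
Qed.

Lemma u_max_lt_1 (a b : R) : 0 < b -> b < a -> a^2 > 2 * b^2 -> u_max a b < 1.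
Proof.
  intros hb hab ha2.
  unfold u_max. rewrite focal_c_sq by assumption.
  set (t := sqrt (a^2 - 2 * b^2)).
  assert (ht : t^2 = a^2 - 2 * b^2) by (unfold t; rewrite pow2_sqrt; nra).
  assert (ht0 : 0 <= t) by apply sqrt_pos.
  assert (hsq : (a * t)^2 < (a^2 - b^2)^2).
  { rewrite Rpow_mult_distr, ht. assert (0 < b^4) by (apply pow_lt; lra). nra. }
  apply (Rmult_lt_reg_r (a^2 - b^2)); [nra|].
  unfold Rdiv. field_simplify; nra.
Qed.

Lemma sq_lt_1_of_abs_lt_1 (u : R) : Rabs u < 1 -> u^2 < 1.
Proof.
  intros hu. assert (0 <= Rabs u) by apply Rabs_pos.
  rewrite <- (pow2_abs u). nra.
Qed.

Theorem mainTheorem4 (a b u : R) :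
  0 < b -> b < a -> a / b > sqrt 2 ->
  Rabs u < u_max a b ->
  a^2 + (u^2 - 2) * (focal_c a b)^2 <> 0 ->
  1 / (radR a b u)^2 + 1 / (radR' a b u)^2 = 1 / (focal_c a b)^2.
Proof.
  intros hb hab hs hu hD.
  assert (hu2 : u^2 < 1).
  { apply sq_lt_1_of_abs_lt_1.
    pose proof (u_max_lt_1 a b hb hab (ratio_gt_sqrt2_sq a b hb hs)). lra. }
  pose proof (focal_c_sq a b hab hb) as hc2.
  pose proof (focal_c_pos a b hab hb) as hc.
  assert (hs2 : (sqrt (1 - u^2))^2 = 1 - u^2) by (rewrite pow2_sqrt; lra).
  assert (hs0 : 0 < sqrt (1 - u^2)) by (apply sqrt_lt_R0; lra).
  assert (hN : a^2 - (focal_c a b)^2 * u^2 <> 0) by (rewrite hc2; nra).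
  unfold radR, radR'.
  replace ((focal_c a b)^2 * u^2 - a^2)
    with (- (a^2 - (focal_c a b)^2 * u^2)) by ring.
  apply inv_sq_sum_of_identity; try lra.
  rewrite hs2, hc2. rewrite <- radii_key_identity. ring.
Qed.
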